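(* In the type $\mathbb A$ setting described in the context, for all $0\le i\le m-2$, $1\le k\le m-1-i$ and $0\le j\le i$ we have $$\mu_{(\mathbf x[i],B[i])}(x_k[i])=\frac{x_{k-1}[i]+x_{k+1}[i]}{x_k[i]}=\frac{x_{k-1+j}[i-j]+x_{k+1+j}[i-j]}{x_{k+j}[i-j]},$$ where $\mu_{(\mathbf y,C)}(y_k)$ denotes the $k$th entry of the first component of $\mu_k(\mathbf y,C)$.
   Context: Let $K$ be a field of characteristic $0$ or $K=\mathbb Z$, let $n\ge1$, $m=n+1$, $p=n$, and $\mathcal F=K(X_1,\dots,X_m)$. Let $B=(b_{ij})\in M_{m,n}(\mathbb Z)$ have $b_{i,i+1}=-1$ for $1\le i\le n-1$, $b_{i+1,i}=1$ for $1\le i\le n$, and all other entries $0$ (so the last row is $(0,\dots,0,1)$). Let $\mathbf x=(x_1,\dots,x_m)$ be algebraically independent over $K$ in $\mathcal F$. For $1\le k\le n$ the mutation $\mu_k(\mathbf y,C)=(\mathbf y',C')$ of a pair $(\mathbf y,C)$ is given by $c'_{ij}=-c_{ij}$ if $i=k$ or $j=k$, and $c'_{ij}=c_{ij}+\frac{|c_{ik}|c_{kj}+c_{ik}|c_{kj}|}{2}$ otherwise; $y'_s=y_s$ for $s\neq k$ and $y'_k=y_k^{-1}\big(\prod_{c_{ik}>0}y_i^{c_{ik}}+\prod_{c_{ik}<0}y_i^{-c_{ik}}\big)$. Set $(\mathbf x[0],B[0])=(\mathbf x,B)$ and, for $1\le i\le m-1$, $(\mathbf x[i],B[i])=\mu_{m-i}\cdots\mu_2\mu_1(\mathbf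 x[i-1],B[i-1])$ (apply $\mu_1$ first). Write $\mathbf x[i]=(x_1[i],\dots,x_m[i])$ and use the conventions $x_0[i]=1$, $x_{-1}[i]=0$ for all $i$. *)

From HB Require Import structures.
From mathcomp Require Import all_boot all_order all_algebra.
From mathcomp Require Import mpoly.
Set Implicit Arguments. Unset Strict Implicit. Unset Printing Implicit Defensive.
Import Order.TTheory GRing.Theory Num.Theory.
Local Open Scope ring_scope.

Definition ratfun (K : idomainType) (m : nat) := {fraction {mpoly K[m]}}.

Definition constF (K : idomainType) (m : nat) (c : K) : ratfun K m :=
  @FracField.tofrac _ (c%:MP).

(* x_1,...,x_m (stored at nat indices 1..m) are algebraically independent
   over K in F. *)
Definition alg_indep (K : idomainType) (m : nat) (x : nat -> ratfun K m) :=
  forall p : {mpoly K[m]},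
    (map_mpoly (@constF K m) p).@[fun i : 'I_m => x i.+1] = 0 -> p = 0.

(* A seed: cluster y_1..y_m (nat indices 1..m) and integer matrix C
   (entries c_{ij} at nat indices i in 1..m, j in 1..n). *)
Definition seed (F : Type) := ((nat -> F) * (nat -> nat -> int))%type.

Definition mut_mx (k : nat) (C : nat -> nat -> int) : nat -> nat -> int :=
  fun i j =>
    if (i == k) || (j == k) then - C i j
    else C i j + ((`|C i k|%N%:Z * C k j + C i k * `|C k j|%N%:Z) %/ 2)%Z.

Definition mutate (F : fieldType) (m k : nat) (s : seed F) : seed F :=
  let y := s.1 in let C := s.2 in
  (fun l => if l == k then
      (y k)^-1 * (\prod_(1 <= i < m.+1 | (0 < C i k)%R) y i ^+ `|C i k|%N
                 + \prod_(1 <= i < m.+1 | (C i k < 0)%R) y i ^+ `|C i k|%N)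
    else y l,
   mut_mx k C).

(* mu_r ... mu_2 mu_1 s  (mu_1 applied first). *)
Definition mutate_upto (F : fieldType) (m r : nat) (s : seed F) : seed F :=
  foldl (fun t k => mutate m k t) s (iota 1 r).

(* The type A exchange matrix B (m = n+1 rows, n columns), 1-based. *)
Definition BA (n : nat) : nat -> nat -> int := fun i j =>
  if [&& 1 <= i, i <= n.-1 & j == i.+1]%N then -1
  else if [&& 1 <= j, j <= n & i == j.+1]%N then 1
  else 0.

(* (x[i], B[i]) with (x[0],B[0]) = (x,B),
   (x[i],B[i]) = mu_{m-i} ... mu_1 (x[i-1],B[i-1]). *)
Fixpoint seedA (F : fieldType) (n : nat) (x : nat -> F) (i : nat) : seed F :=
  match i with
  | 0 => (x, BA n)
  | i'.+1 => mutate_upto n.+1 (n.+1 - i'.+1) (seedA n x i')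
  end.

Definition xA (F : fieldType) (n : nat) (x : nat -> F) (i l : nat) : F :=
  if l == 0%N then 1 else (seedA n x i).1 l.

From HB Require Import structures.
From mathcomp Require Import all_boot all_order all_algebra.
From mathcomp Require Import mpoly.
From mathcomp Require Import zify ring lra.
Import Order.TTheory GRing.Theory Num.Theory.
Local Open Scope ring_scope.
Set Implicit Arguments. Unset Strict Implicit. Unset Printing Implicit Defensive.

(* All exchange matrices met are orientations of the path 1 - ... - n+1, and
   each mutation of the sweep mu_{m-i} ... mu_1 happens at a sink or a source,
   so it just reverses the two edges at that vertex.  Hence the sweep yields the
   exchange relations x_l[i] x_l[i+1] = x_{l-1}[i+1] x_{l+1}[i] + 1, while
   mutating B[i] at k <= m-1-i gives (x_{k-1}[i] + x_{k+1}[i]) / x_k[i].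
   Eliminating x_{k-1}[i+1] between the relations for l = k and l = k+1 shows
   that this ratio at (i+1, k) equals the one at (i, k+1); iterate j times.
   The divisions are harmless: every x_l[i] is a quotient of polynomials with a
   positive integer value at (1, ..., 1), which cannot vanish at algebraically
   independent x in characteristic 0. *)

Definition bsign (b : bool) : int := if b then 1 else -1.

Lemma bsignN b : bsign (~~ b) = - bsign b. Proof. by case: b. Qed.
Lemma abs_bsign b : `|bsign b|%N = 1%N. Proof. by case: b. Qed.
Lemma bsign_gt0 b : (0 < bsign b) = b. Proof. by case: b. Qed.
Lemma bsign_lt0 b : (bsign b < 0) = ~~ b. Proof. by case: b. Qed.
Lemma bsign_mul_eq b : bsign b * bsign b = 1. Proof. by case: b. Qed.
Lemma bsign_mul_neq b b' : b != b' -> bsign b * bsign b' = -1.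
Proof. by case: b; case: b'. Qed.

(* The edge {c, c+1} of the path 1 - ... - n+1 is oriented according to s c,
   for 1 <= c <= n; [BA n] is the orientation with s constantly true. *)
Definition typeA_mx (n : nat) (s : nat -> bool) : nat -> nat -> int :=
  fun i j =>
    if [&& 1 <= j, j <= n & i == j.+1]%N then bsign (s j)
    else if [&& 1 <= i, i.+1 <= n & j == i.+1]%N then - bsign (s i) else 0.

Definition flip_pair (s : nat -> bool) (k : nat) : nat -> bool :=
  fun c => if (c == k.-1) || (c == k) then ~~ s c else s c.

Lemma eq_typeA_mx n s s' : (forall c, (1 <= c <= n)%N -> s c = s' c) ->
  typeA_mx n s =2 typeA_mx n s'.
Proof.
move=> ss' i j; rewrite /typeA_mx.
case: ifP => [/and3P[j1 jn _]|_]; first by rewrite ss' ?j1.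
by case: ifP => [/and3P[i1 iSn _]|_] //; rewrite ss' // i1 ltnW.
Qed.

Lemma BA_typeA n : BA n =2 typeA_mx n (fun=> true).
Proof.
move=> i j; rewrite /BA /typeA_mx /=.
have -> : [&& 1 <= i, i <= n.-1 & j == i.+1]%N = [&& 1 <= i, i.+1 <= n & j == i.+1]%N.
  by case: n => [|n]; case: i.
case: (boolP [&& 1 <= j, j <= n & i == j.+1]%N) => h1;
case: (boolP [&& 1 <= i, i.+1 <= n & j == i.+1]%N) => h2 //.
by move: h1 h2 => /and3P[_ _ /eqP ij] /and3P[_ _ /eqP ji]; lia.
Qed.

Lemma typeA_mx_flip_pair n s k a b : (1 <= k)%N -> a != k -> b != k ->
  typeA_mx n (flip_pair s k) a b = typeA_mx n s a b.
Proof.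
move=> k1 ak bk; rewrite /typeA_mx /flip_pair.
case: ifP => [/and3P[_ _ /eqP ab]|_].
  by have -> : (b == k.-1) || (b == k) = false by lia.
case: ifP => [/and3P[_ _ /eqP ba]|_] //.
by have -> : (a == k.-1) || (a == k) = false by lia.
Qed.

Lemma mut_correction_eq0 (u v : int) : u * v <= 0 ->
  ((`|u|%N%:Z * v + u * `|v|%N%:Z) %/ 2)%Z = 0.
Proof.
move=> uv; suff -> : `|u|%N%:Z * v + u * `|v|%N%:Z = 0 by [].
rewrite !abszE; case: (lerP 0 u) => u0; case: (lerP 0 v) => v0.
- by rewrite !ger0_norm //; nra.
- by rewrite ger0_norm // ltr0_norm //; nra.
- by rewrite ltr0_norm // ger0_norm //; nra.
- by rewrite !ltr0_norm //; nra.
Qed.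

(* The hypothesis says that vertex k is a sink or a source. *)
Lemma typeA_mx_mul_le0 n s k a b : (1 <= k)%N -> (1 < k -> s k.-1 != s k)%N ->
  typeA_mx n s a k * typeA_mx n s k b <= 0.
Proof.
move=> k1 alt; rewrite /typeA_mx.
case: ifP => [_|_].
  case: ifP => [/and3P[b1 _ /eqP kb]|_].
    by subst k; rewrite bsign_mul_neq // eq_sym alt.
  case: ifP => [_|_]; last by rewrite mulr0.
  by rewrite mulrN bsign_mul_eq.
case: ifP => [/and3P[a1 _ /eqP ka]|_]; last by rewrite mul0r.
case: ifP => [/and3P[_ _ /eqP kb]|_].
  have -> : b = a by lia.
  by rewrite mulNr bsign_mul_eq.
case: ifP => [/and3P[_ _ /eqP bk]|_]; last by rewrite mulr0.
by subst k b; rewrite mulrNN bsign_mul_neq ?alt.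
Qed.

Lemma typeA_mx_flip_pair_at n s k a b : (a == k) || (b == k) ->
  typeA_mx n (flip_pair s k) a b = - typeA_mx n s a b.
Proof.
move=> abk; rewrite /typeA_mx /flip_pair.
case: ifP => [/and3P[_ _ /eqP ab]|_].
  have -> : (b == k.-1) || (b == k) by lia.
  by rewrite bsignN.
case: ifP => [/and3P[_ _ /eqP ba]|_]; last by rewrite oppr0.
have -> : (a == k.-1) || (a == k) by lia.
by rewrite bsignN.
Qed.

Lemma mut_mx_typeA n s C k : (1 <= k)%N -> (1 < k -> s k.-1 != s k)%N ->
  C =2 typeA_mx n s -> mut_mx k C =2 typeA_mx n (flip_pair s k).
Proof.
move=> k1 alt hC a b; rewrite /mut_mx !hC.
case: ifP => [abk|/negbT]; first by rewrite typeA_mx_flip_pair_at.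
rewrite negb_or => /andP[ak bk].
by rewrite mut_correction_eq0 ?addr0 ?typeA_mx_flip_pair // typeA_mx_mul_le0.
Qed.

Lemma prod_typeA_col (R : comPzRingType) n s C k (y : nat -> R) (P : pred int) :
  (1 <= k <= n)%N -> ~~ P 0 -> C =2 typeA_mx n s ->
  \prod_(1 <= i < n.+2 | P (C i k)) y i ^+ `|C i k|%N =
    (if P (bsign (s k)) then y k.+1 else 1) *
    (if (1 < k)%N && P (- bsign (s k.-1)) then y k.-1 else 1).
Proof.
move=> /andP[k1 kn] nP0 hC; rewrite big_mkcond.
rewrite (eq_bigr (fun i =>
   (if i == k.+1 then (if P (bsign (s k)) then y k.+1 else 1) else 1) *
   (if i == k.-1 then (if (1 < k)%N && P (- bsign (s k.-1)) then y k.-1 else 1)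
    else 1))); last first.
  move=> i _; rewrite hC /typeA_mx.
  have [->|iSk] := eqVneq i k.+1.
    rewrite k1 kn /= (_ : k.+1 == k.-1 = false) ?mulr1; last by lia.
    by case: ifP; rewrite ?abs_bsign ?expr1.
  rewrite !andbF mul1r; have [->|ik] := eqVneq i k.-1; last first.
    have -> : [&& (0 < i)%N, (i.+1 <= n)%N & k == i.+1] = false by lia.
    by rewrite (negbTE nP0).
  case: (ltnP 1 k) => k2 /=; last first.
    rewrite (_ : (0 < k.-1)%N = false) ?(negbTE nP0) //; lia.
  have -> : [&& (0 < k.-1)%N, (k.-1.+1 <= n)%N & k == k.-1.+1] by lia.
  by case: ifP; rewrite ?abszN ?abs_bsign ?expr1.
rewrite big_split /= -!big_mkcond !big_nat1_eq (_ : (1 <= k.+1 < n.+2)%N); last by lia.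
case: (ltnP 1 k) => k2 /=; last by rewrite if_same.
by rewrite (_ : (1 <= k.-1 < n.+2)%N) //; lia.
Qed.

Lemma mutate_cluster_other (F : fieldType) m k (t : seed F) l :
  l != k -> (mutate m k t).1 l = t.1 l.
Proof. by rewrite /mutate /= => /negbTE ->. Qed.

Lemma mutate_typeA (F : fieldType) n s (t : seed F) k :
  (1 <= k <= n)%N -> t.2 =2 typeA_mx n s ->
  (mutate n.+1 k t).1 k = (t.1 k)^-1 *
    ((if s k then t.1 k.+1 else 1) *
       (if (1 < k)%N && ~~ s k.-1 then t.1 k.-1 else 1)
   + (if s k then 1 else t.1 k.+1) *
       (if (1 < k)%N && s k.-1 then t.1 k.-1 else 1)).
Proof.
move=> hk ht; rewrite /mutate /= eqxx.
rewrite (prod_typeA_col (P := fun v => 0 < v) _ hk _ ht) //.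
rewrite (prod_typeA_col (P := fun v => v < 0) _ hk _ ht) //.
by rewrite !bsign_gt0 !oppr_gt0 !bsign_lt0 oppr_lt0 bsign_gt0 if_neg.
Qed.

Lemma mutate_uptoS (F : fieldType) m r (t : seed F) :
  mutate_upto m r.+1 t = mutate m r.+1 (mutate_upto m r t).
Proof.
by rewrite /mutate_upto -[X in iota _ X]addn1 iotaD add1n cats1 foldl_rcons.
Qed.

Lemma mutate_upto_cluster_other (F : fieldType) m r (t : seed F) l :
  (r < l)%N || (l == 0%N) -> (mutate_upto m r t).1 l = t.1 l.
Proof.
elim: r => [|r IH] hl //.
by rewrite mutate_uptoS mutate_cluster_other ?IH //; lia.
Qed.

(* Mutating at 1, ..., r reverses edge c twice for c < r, so only edge r stays
   reversed. *)
Definition sweep_sign (t r : nat) : nat -> bool := fun c => (c <= t)%N && (c != r).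

Section Sweep.

Variables (F : fieldType) (n t : nat) (t0 : seed F).
Hypotheses (tn : (t <= n)%N) (t0_mx : t0.2 =2 typeA_mx n (fun c => c <= t)%N).

Lemma sweep_mx r : (r <= t)%N ->
  (mutate_upto n.+1 r t0).2 =2 typeA_mx n (sweep_sign t r).
Proof.
elim: r => [|r IH] rt.
  by move=> u v; rewrite t0_mx; apply: eq_typeA_mx => c; rewrite /sweep_sign; lia.
rewrite mutate_uptoS /= => u v.
rewrite (mut_mx_typeA (n := n) (s := sweep_sign t r)) //.
- by apply: eq_typeA_mx => c _; rewrite /flip_pair /sweep_sign /=; case: ifP; lia.
- by move=> _; rewrite /sweep_sign /=; lia.
- by apply: IH; lia.
Qed.

Lemma sweep_exchange r l : (r <= t)%N -> (1 <= l <= r)%N ->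
  (mutate_upto n.+1 r t0).1 l = (t0.1 l)^-1 *
    ((if l == 1%N then 1 else (mutate_upto n.+1 r t0).1 l.-1) * t0.1 l.+1 + 1).
Proof.
elim: r => [|r IH] rt hl; first lia.
rewrite mutate_uptoS; set st := mutate_upto n.+1 r t0.
have st_other j : j != r.+1 -> (mutate n.+1 r.+1 st).1 j = st.1 j.
  exact: mutate_cluster_other.
have [->|lr] := eqVneq l r.+1; last first.
  by rewrite !st_other ?IH //; lia.
have st_mx : st.2 =2 typeA_mx n (sweep_sign t r) by apply: sweep_mx; lia.
rewrite (mutate_typeA _ st_mx) ?st_other; try lia.
have -> : sweep_sign t r r.+1 by rewrite /sweep_sign; lia.
have -> : sweep_sign t r r = false by rewrite /sweep_sign; lia.
have -> : st.1 r.+1 = t0.1 r.+1 by apply: mutate_upto_cluster_other; lia.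
have -> : st.1 r.+2 = t0.1 r.+2 by apply: mutate_upto_cluster_other; lia.
by rewrite andbT andbF mul1r ltnS lt0n eqSS if_neg [_ * t0.1 r.+2]mulrC.
Qed.

End Sweep.

Lemma seedAS (F : fieldType) n (x : nat -> F) i :
  seedA n x i.+1 = mutate_upto n.+1 (n - i) (seedA n x i).
Proof. by rewrite /= subSS. Qed.

Lemma seedA_mx (F : fieldType) n (x : nat -> F) i :
  (seedA n x i).2 =2 typeA_mx n (fun c => c <= n - i)%N.
Proof.
elim: i => [|i IH] u v.
  by rewrite /= BA_typeA; apply: eq_typeA_mx => c /andP[_ cn]; rewrite subn0 cn.
rewrite seedAS (sweep_mx (leq_subr i n) IH (leqnn _)).
by apply: eq_typeA_mx => c /andP[c1 _]; rewrite /sweep_sign /=; lia.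
Qed.

Lemma xA_frozen (F : fieldType) n (x : nat -> F) i l :
  (n - i < l)%N -> xA n x i.+1 l = xA n x i l.
Proof. by move=> il; rewrite /xA seedAS mutate_upto_cluster_other ?il. Qed.

Lemma xA_exchange (F : fieldType) n (x : nat -> F) i l : (1 <= l <= n - i)%N ->
  xA n x i.+1 l = (xA n x i l)^-1 * (xA n x i.+1 l.-1 * xA n x i l.+1 + 1).
Proof.
move=> hl; rewrite /xA.
have -> : (l == 0%N) = false by lia.
have -> : (l.-1 == 0%N) = (l == 1%N) by lia.
rewrite seedAS /=.
exact: (sweep_exchange (leq_subr i n) (seedA_mx n x i) (leqnn _) hl).
Qed.

HB.instance Definition _ (K : idomainType) (m : nat) :=
  GRing.RMorphism.copy (@constF K m) (@FracField.tofrac _ \o @mpolyC m K).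

Section Positivity.

Variables (K : idomainType) (m : nat) (x : nat -> ratfun K m).

Definition eval_at (p : {mpoly K[m]}) : ratfun K m :=
  (map_mpoly (@constF K m) p).@[fun i : 'I_m => x i.+1].

Lemma eval_at1 : eval_at 1 = 1.
Proof. by rewrite /eval_at rmorph1 meval1. Qed.

Lemma eval_atX (i : 'I_m) : eval_at 'X_i = x i.+1.
Proof. by rewrite /eval_at map_mpolyX mevalXU. Qed.

Lemma eval_atD p q : eval_at (p + q) = eval_at p + eval_at q.
Proof. by rewrite /eval_at rmorphD mevalD. Qed.

Lemma eval_atM p q : eval_at (p * q) = eval_at p * eval_at q.
Proof. by rewrite /eval_at rmorphM mevalM. Qed.

(* A weak substitute for subtraction-freeness: it is closed under sums and
   products, and forces p != 0 in characteristic 0. *)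
Definition ones_positive (p : {mpoly K[m]}) :=
  exists2 a : nat, (0 < a)%N & p.@[fun=> 1] = a%:R.

Lemma ones_positive1 : ones_positive 1.
Proof. by exists 1%N; rewrite ?meval1. Qed.

Lemma ones_positiveX (i : 'I_m) : ones_positive 'X_i.
Proof. by exists 1%N; rewrite ?mevalXU. Qed.

Lemma ones_positiveD p q :
  ones_positive p -> ones_positive q -> ones_positive (p + q).
Proof.
move=> [a a0 pa] [b b0 qb]; exists (a + b)%N; first by rewrite addn_gt0 a0.
by rewrite mevalD pa qb natrD.
Qed.

Lemma ones_positiveM p q :
  ones_positive p -> ones_positive q -> ones_positive (p * q).
Proof.
move=> [a a0 pa] [b b0 qb]; exists (a * b)%N; first by rewrite muln_gt0 a0.
by rewrite mevalM pa qb natrM.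
Qed.

Definition ones_positive_ratio (f : ratfun K m) := exists p q,
  [/\ ones_positive p, ones_positive q & f = eval_at p / eval_at q].

Lemma ones_positive_ratio1 : ones_positive_ratio 1.
Proof. by exists 1, 1; rewrite eval_at1 divr1; split => //; apply: ones_positive1. Qed.

Lemma ones_positive_ratioX (i : 'I_m) : ones_positive_ratio (x i.+1).
Proof.
exists 'X_i, 1; rewrite eval_at1 eval_atX divr1.
by split; [apply: ones_positiveX | apply: ones_positive1 |].
Qed.

Lemma ones_positive_ratioV f : ones_positive_ratio f -> ones_positive_ratio f^-1.
Proof. by move=> [p [q [pp pq ->]]]; exists q, p; rewrite invf_div. Qed.

Lemma ones_positive_ratioM f g :
  ones_positive_ratio f -> ones_positive_ratio g -> ones_positive_ratio (f * g).
Proof.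
move=> [p [q [pp pq ->]]] [p' [q' [pp' pq' ->]]]; exists (p * p'), (q * q').
by rewrite !eval_atM mulf_div; split => //; apply: ones_positiveM.
Qed.

Hypotheses (charK : [pchar K] =i pred0) (x_indep : alg_indep x).

Lemma eval_at_ones_positive_neq0 p : ones_positive p -> eval_at p != 0.
Proof.
move=> [a a0 pa]; apply/eqP => /x_indep p0.
move: pa; rewrite p0 meval0 => /esym/eqP; apply/negP.
by rewrite (pcharf0P K).1 // -lt0n a0.
Qed.

Lemma ones_positive_ratio_neq0 f : ones_positive_ratio f -> f != 0.
Proof.
by move=> [p [q [pp pq ->]]]; rewrite mulf_neq0 ?invr_neq0 ?eval_at_ones_positive_neq0.
Qed.

Lemma ones_positive_ratioD f g :
  ones_positive_ratio f -> ones_positive_ratio g -> ones_positive_ratio (f + g).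
Proof.
move=> [p [q [pp pq ->]]] [p' [q' [pp' pq' ->]]].
exists (p * q' + p' * q), (q * q').
rewrite eval_atD !eval_atM addf_div ?eval_at_ones_positive_neq0 //.
by split; do ?[apply: ones_positiveD | apply: ones_positiveM].
Qed.

End Positivity.

Definition exchange_ratio (F : fieldType) n (x : nat -> F) i k :=
  (xA n x i k.-1 + xA n x i k.+1) / xA n x i k.

Lemma exchange_ratio_identity (F : fieldType) (a1 a2 a3 b0 b1 b2 : F) :
  a1 != 0 -> a2 != 0 -> b1 != 0 ->
  b1 = a1^-1 * (b0 * a2 + 1) -> b2 = a2^-1 * (b1 * a3 + 1) ->
  (b0 + b2) / b1 = (a1 + a3) / a2.
Proof.
move=> a1_neq0 a2_neq0 b1_neq0 def_b1 ->.
have -> : b0 = (b1 * a1 - 1) / a2 by rewrite def_b1; field; rewrite a1_neq0 a2_neq0.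
by field; rewrite a2_neq0 b1_neq0.
Qed.

Section TypeAClusters.

Variables (K : idomainType) (n : nat) (x : nat -> ratfun K n.+1).
Hypotheses (charK : [pchar K] =i pred0) (x_indep : alg_indep x).

Lemma xA_ones_positive_ratio i l :
  (l <= n.+1)%N -> ones_positive_ratio x (xA n x i l).
Proof.
elim: i l => [|i IHi] l.
  rewrite /xA /=; case: eqP => [_ _|/eqP l0 ln]; first exact: ones_positive_ratio1.
  have l1 : (l.-1 < n.+1)%N by lia.
  by have := ones_positive_ratioX x (Ordinal l1); rewrite /= prednK // lt0n.
elim: l => [|l IHl] ln; first by rewrite /xA; exact: ones_positive_ratio1.
have [il|li] := ltnP (n - i) l.+1; first by rewrite xA_frozen //; apply: IHi.
rewrite xA_exchange; last lia.
apply: ones_positive_ratioM; first by apply: ones_positive_ratioV; apply: IHi.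
apply: ones_positive_ratioD => //; last exact: ones_positive_ratio1.
by apply: ones_positive_ratioM; [apply: IHl | apply: IHi]; lia.
Qed.

Lemma xA_neq0 i l : (l <= n.+1)%N -> xA n x i l != 0.
Proof.
move=> ln; apply: (ones_positive_ratio_neq0 charK x_indep).
exact: xA_ones_positive_ratio.
Qed.

Lemma exchange_ratio_shift i k : (1 <= k)%N -> (k.+1 <= n - i)%N ->
  exchange_ratio n x i.+1 k = exchange_ratio n x i k.+1.
Proof.
move=> k1 kn; rewrite /exchange_ratio /=.
apply: (exchange_ratio_identity (a1 := xA n x i k) (a2 := xA n x i k.+1)).
- by apply: xA_neq0; lia.
- by apply: xA_neq0; lia.
- by apply: xA_neq0; lia.
- by apply: xA_exchange; lia.
- by apply: xA_exchange; lia.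
Qed.

Lemma exchange_ratio_shiftn i k j :
  (1 <= k)%N -> (k <= n - i)%N -> (j <= i <= n)%N ->
  exchange_ratio n x i k = exchange_ratio n x (i - j) (k + j).
Proof.
move=> k1 kn; elim: j => [|j IH] ji; first by rewrite subn0 addn0.
rewrite IH; last lia.
have -> : (i - j = (i - j.+1).+1)%N by lia.
by rewrite exchange_ratio_shift ?addnS //; lia.
Qed.

End TypeAClusters.

Lemma mutate_seedA (F : fieldType) n (x : nat -> F) i k : (1 <= k <= n - i)%N ->
  (mutate n.+1 k (seedA n x i)).1 k = exchange_ratio n x i k.
Proof.
move=> hk; rewrite (mutate_typeA _ (seedA_mx n x i)) /=; last lia.
have -> : (k <= n - i)%N by lia.
have -> : (k.-1 <= n - i)%N by lia.
rewrite andbF andbT mulr1 mul1r /exchange_ratio /xA.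
have -> : (k == 0%N) = false by lia.
have -> : (1 < k)%N = (k.-1 != 0%N) by lia.
by rewrite if_neg addrC mulrC.
Qed.

Theorem lemma7p1 (K : idomainType) (hK : [pchar K] =i pred0) (n : nat)
  (hn : (1 <= n)%N) (x : nat -> ratfun K n.+1)
  (hx : alg_indep x) (i k j : nat) :
  (i <= n.+1 - 2)%N -> (1 <= k)%N -> (k <= n.+1 - 1 - i)%N -> (j <= i)%N ->
  (mutate n.+1 k (seedA n x i)).1 k
    = (xA n x i k.-1 + xA n x i k.+1) / xA n x i k
  /\ (xA n x i k.-1 + xA n x i k.+1) / xA n x i k
    = (xA n x (i - j) (k.-1 + j) + xA n x (i - j) (k.+1 + j))
        / xA n x (i - j) (k + j).
Proof.
move=> hi k1 hk hj.
split; first by apply: mutate_seedA; lia.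
have -> : (k.-1 + j = (k + j).-1)%N by lia.
have -> : (k.+1 + j = (k + j).+1)%N by lia.
apply: (exchange_ratio_shiftn hK hx); lia.
Qed.
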